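(* Consider $\bm{y}=\bm{A}\bm{x}+\bm{w}$ over $\mathbb{H}\in\{\mathbb{R},\mathbb{C}\}$, with $\bm A$ having i.i.d. entries $\mathcal{N}(0,1/m)$ (resp. $\mathcal{CN}(0,1/m)$), Gaussian noise of variance $\sigma_w^2=\delta\sigma_0^2$ ($\delta=m/n$, $\sigma_0^2>0$ constant), and signal entries i.i.d. from the least-favorable distribution with sparsity level $\epsilon\in(0,1]$, recovered by AMP with (real or complex) soft thresholding and optimal threshold. Let $\delta^\dagger$ be the MSE-optimal measurement ratio, which satisfies $\delta^\dagger=2M(\epsilon,\alpha^\dagger)$ in the real case and $\delta^\dagger=2M_C(\epsilon,\alpha^\dagger)$ in the complex case. Then $\delta^{\dagger}<2$. Moreover, if $M(\epsilon,\alpha^{\dagger})<0.5$ in the real case, respectively $M_C(\epsilon,\alpha^{\dagger})<0.5$ in the complex case, then $\delta^{\dagger}<1$.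
   Context: Real case: the least-favorable distribution is $p_x=\frac{\epsilon}{2}\Delta_{x=-\mu}+(1-\epsilon)\Delta_{x=0}+\frac{\epsilon}{2}\Delta_{x=\mu}$ with $\mu\to\infty$, and $$M(\epsilon,\alpha)=\epsilon(1+\alpha^2)+(1-\epsilon)\left[2(1+\alpha^2)\Phi(-\alpha)-2\alpha\phi(\alpha)\right],\quad \alpha^\dagger=\arg\min_{\alpha\ge0}M(\epsilon,\alpha).$$ Complex case: $|x|$ has distribution $(1-\epsilon)\Delta_{|x|=0}+\epsilon\Delta_{|x|=+\infty}$ with isotropic phase, the estimator is $\eta(\beta,\lambda)=(\beta-\lambda\beta/|\beta|)\mathbf{1}_{\{|\beta|>\lambda\}}$, and $$M_C(\epsilon,\alpha)=\epsilon(1+\alpha^2)+(1-\epsilon)\left[\sqrt{2\pi}\,\phi(\sqrt2\alpha)-2\alpha\sqrt{\pi}\,\Phi(-\sqrt2\alpha)\right],\quad \alpha^\dagger=\arg\min_{\alpha\ge0}M_C(\epsilon,\alpha).$$ Here $\phi,\Phi$ are the standard Gaussian density and CDF. The MSE-optimal $\delta^\dagger$ is the minimizer over $\delta$ of the state-evolution fixed-point MSE $\mathrm{Err}_\infty=\frac{M\delta^2\sigma_0^2}{\delta-M}$ (with $M=M(\epsilon,\alpha^\dagger)$ or $M_C(\epsilon,\alpha^\dagger)$), assuming AMP converges. *)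

From Stdlib Require Import Reals.
From Coquelicot Require Import Coquelicot.
Open Scope R_scope.

Definition phi (x : R) : R := exp (- (x ^ 2) / 2) / sqrt (2 * PI).

Definition Phi (x : R) : R :=
  RInt_gen phi (Rbar_locally m_infty) (at_point x).

Definition M_R (eps alpha : R) : R :=
  eps * (1 + alpha ^ 2)
  + (1 - eps) * (2 * (1 + alpha ^ 2) * Phi (- alpha) - 2 * alpha * phi alpha).

Definition M_C (eps alpha : R) : R :=
  eps * (1 + alpha ^ 2)
  + (1 - eps) * (sqrt (2 * PI) * phi (sqrt 2 * alpha)
                 - 2 * alpha * sqrt PI * Phi (- (sqrt 2 * alpha))).

(* cplx = false : real case (H = R);  cplx = true : complex case (H = C) *)
Definition Mfun (cplx : bool) : R -> R -> R := if cplx then M_C else M_R.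

(* state-evolution fixed-point MSE  Err_oo = M delta^2 sigma0^2 / (delta - M),
   meaningful (AMP converges to a finite fixed point) for delta > M *)
Definition Err_inf (M sigma0sq delta : R) : R :=
  M * delta ^ 2 * sigma0sq / (delta - M).

Definition is_alpha_dagger (cplx : bool) (eps alpha : R) : Prop :=
  0 <= alpha /\ forall a, 0 <= a -> Mfun cplx eps alpha <= Mfun cplx eps a.

Definition is_delta_dagger (M sigma0sq delta : R) : Prop :=
  M < delta /\ forall d, M < d -> Err_inf M sigma0sq delta <= Err_inf M sigma0sq d.

(* Over [delta > M] the error [M delta^2 sigma0^2 / (delta - M)] exceeds its value at
   [delta = 2 M] by [M sigma0^2 (delta - 2 M)^2 / (delta - M)], so [delta_dag = 2 M] with
   [M = M(eps, alpha_dag)], and both claims reduce to [0 < M < 1].  Positivity follows from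
   the Mills-ratio bounds [a phi a <= (1 + a^2) Phi (-a)] and [t Phi (-t) <= phi t];
   [M < 1] because [M(eps, 0) = 1] and [M(eps, .)] decreases near [0], so some [a >= 0]
   beats [1].  Both need [Phi] itself, in particular [Phi 0 = 1/2]: this is the Gaussian
   integral, obtained from the identity
   [(int_0^x exp (- t^2))^2 + int_0^1 exp (- x^2 (1 + t^2)) / (1 + t^2) dt = PI / 4],
   whose left side has derivative [0]. *)

From Stdlib Require Import Reals Lra Psatz.
From Coquelicot Require Import Coquelicot.
Open Scope R_scope.

Lemma exp_le_exp x y : x <= y -> exp x <= exp y.
Proof. intros [Hlt | ->]; [apply Rlt_le, exp_increasing, Hlt | apply Rle_refl]. Qed.

Lemma exp_opp_le_inv z : 0 <= z -> exp (- z) <= / (1 + z).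
Proof. intros Hz. rewrite exp_Ropp. apply Rinv_le_contravar; [lra | apply exp_ineq1_le]. Qed.

Lemma ex_RInt_derivable (f : R -> R) a b : (forall x : R, ex_derive f x) -> ex_RInt f a b.
Proof.
  intros Hf. apply (@ex_RInt_continuous R_CompleteNormedModule).
  intros z _. apply (@ex_derive_continuous R_AbsRing R_NormedModule), Hf.
Qed.

Lemma RInt_is_derive (f df : R -> R) a b :
  (forall x : R, is_derive f x (df x)) -> (forall x : R, continuous df x) ->
  RInt df a b = f b - f a.
Proof.
  intros Hf Hdf. apply (@is_RInt_unique R_CompleteNormedModule).
  apply (@is_RInt_derive R_CompleteNormedModule); auto.
Qed.

Lemma RInt_const_R (c a b : R) : RInt (fun _ => c) a b = (b - a) * c.
Proof. rewrite RInt_const. reflexivity. Qed.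

Lemma is_derive_0_const (f : R -> R) :
  (forall x : R, is_derive f x 0) -> forall x y : R, f x = f y.
Proof.
  intros Hf x y. destruct (Rtotal_order x y) as [Hxy | [-> | Hxy]]; [| reflexivity |].
  - apply (eq_is_derive f); auto.
  - symmetry. apply (eq_is_derive f); auto.
Qed.

(* The tails of [Phi] are bounded by [1 / |u|] ([Phi_tail]); this replaces letting [u -> -oo]. *)
Lemma Rle_0_of_le_inv_opp x c : (forall u, u < c -> u < 0 -> x <= / - u) -> x <= 0.
Proof.
  intros H. apply Rnot_lt_le. intros Hx.
  set (u := Rmin c 0 - 1 - / x).
  assert (Hinv : 0 < / x) by (apply Rinv_0_lt_compat, Hx).
  pose proof (Rmin_l c 0). pose proof (Rmin_r c 0).
  assert (Hu : / - u < x).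
  { rewrite <- (Rinv_inv x). apply Rinv_lt_contravar; unfold u; nra. }
  specialize (H u ltac:(unfold u; lra) ltac:(unfold u; lra)). lra.
Qed.

(** * The Gaussian integral *)

Definition gauss (t : R) : R := exp (- t ^ 2).
Definition gauss_int (x : R) : R := RInt gauss 0 x.
Definition gauss_kernel (x t : R) : R := exp (- (x ^ 2 * (1 + t ^ 2))) / (1 + t ^ 2).
Definition gauss_aux (x : R) : R := RInt (gauss_kernel x) 0 1.

Lemma gauss_int_derive x : is_derive gauss_int x (gauss x).
Proof.
  apply (@is_derive_RInt R_CompleteNormedModule) with 0.
  - apply filter_forall. intros b. apply (@RInt_correct R_CompleteNormedModule).
    apply ex_RInt_derivable. intros; unfold gauss; auto_derive; easy.
  - apply (@ex_derive_continuous R_AbsRing R_NormedModule). unfold gauss; auto_derive; easy.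
Qed.

Lemma gauss_kernel_Derive x t :
  Derive (fun u => gauss_kernel u t) x = -2 * x * exp (- (x ^ 2 * (1 + t ^ 2))).
Proof.
  apply is_derive_unique. unfold gauss_kernel. auto_derive; [nra |]. simpl. field. nra.
Qed.

Lemma gauss_kernel_Derive_continuous x t :
  continuity_2d_pt (fun u v => Derive (fun z => gauss_kernel z v) u) x t.
Proof.
  apply continuity_2d_pt_ext with (fun u v => -2 * u * exp (- (u * u * (1 + v * v)))).
  { intros u v. rewrite gauss_kernel_Derive. simpl. repeat f_equal; ring. }
  apply continuity_2d_pt_mult.
  - apply continuity_2d_pt_mult; [apply continuity_2d_pt_const | apply continuity_2d_pt_id1].
  - apply continuity_1d_2d_pt_comp; [apply derivable_continuous_pt, derivable_pt_exp |].
    apply continuity_2d_pt_opp, continuity_2d_pt_mult.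
    + apply continuity_2d_pt_mult; apply continuity_2d_pt_id1.
    + apply continuity_2d_pt_plus; [apply continuity_2d_pt_const |].
      apply continuity_2d_pt_mult; apply continuity_2d_pt_id2.
Qed.

(* The substitution [s = x t] turns the [x]-derivative of [gauss_aux] into [gauss_int]. *)
Lemma RInt_gauss_kernel_Derive x :
  RInt (fun t => Derive (fun u => gauss_kernel u t) x) 0 1 = -2 * gauss x * gauss_int x.
Proof.
  rewrite (RInt_ext _ (fun t => scal (-2 * gauss x) (scal x (gauss (x * t + 0))))).
  2:{ intros t _. rewrite gauss_kernel_Derive. unfold gauss, scal; simpl; unfold mult; simpl.
      replace (- (x * (x * 1) * (1 + t * (t * 1))))
        with (- (x * (x * 1)) + - ((x * t + 0) * ((x * t + 0) * 1))) by ring.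
      rewrite exp_plus. ring. }
  rewrite (@RInt_scal R_CompleteNormedModule).
  2:{ apply ex_RInt_derivable. intros. unfold gauss, scal; simpl; unfold mult; simpl.
      auto_derive; easy. }
  rewrite (@RInt_comp_lin R_CompleteNormedModule).
  2:{ apply ex_RInt_derivable. intros; unfold gauss; auto_derive; easy. }
  unfold gauss_int, scal; simpl; unfold mult; simpl. repeat f_equal; ring.
Qed.

Lemma gauss_aux_derive x : is_derive gauss_aux x (-2 * gauss x * gauss_int x).
Proof.
  rewrite <- RInt_gauss_kernel_Derive. apply (is_derive_RInt_param gauss_kernel 0 1 x).
  - apply filter_forall. intros y t _. unfold gauss_kernel. auto_derive. nra.
  - intros t _. apply gauss_kernel_Derive_continuous.
  - apply filter_forall. intros y. apply ex_RInt_derivable.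
    intros; unfold gauss_kernel; auto_derive; nra.
Qed.

Lemma gauss_aux_0 : gauss_aux 0 = PI / 4.
Proof.
  unfold gauss_aux. rewrite (RInt_ext _ (fun t => / (1 + t ^ 2))).
  2:{ intros t _. unfold gauss_kernel.
      replace (- (0 ^ 2 * (1 + t ^ 2))) with 0 by ring. rewrite exp_0. apply Rmult_1_l. }
  rewrite (RInt_is_derive atan).
  - rewrite atan_1, atan_0. lra.
  - intros x. apply is_derive_Reals, derivable_pt_lim_atan.
  - intros x. apply (@ex_derive_continuous R_AbsRing R_NormedModule). auto_derive. nra.
Qed.

Lemma gauss_int_sqr_add_aux x : gauss_int x ^ 2 + gauss_aux x = PI / 4.
Proof.
  rewrite <- gauss_aux_0.
  replace (gauss_aux 0) with (gauss_int 0 ^ 2 + gauss_aux 0)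
    by (unfold gauss_int; rewrite RInt_point; unfold zero; simpl; ring).
  apply (is_derive_0_const (fun z => gauss_int z ^ 2 + gauss_aux z)). intros y.
  replace 0 with (INR 2 * gauss y * gauss_int y ^ 1 + -2 * gauss y * gauss_int y)
    by (simpl; ring).
  apply (is_derive_plus (fun z => gauss_int z ^ 2)).
  - apply (is_derive_pow gauss_int 2), gauss_int_derive.
  - apply gauss_aux_derive.
Qed.

Lemma gauss_kernel_bounds x t : 0 <= gauss_kernel x t <= exp (- x ^ 2).
Proof.
  unfold gauss_kernel. pose proof (exp_pos (- (x ^ 2 * (1 + t ^ 2)))).
  assert (1 <= 1 + t ^ 2) by nra.
  split; [apply Rle_mult_inv_pos; lra |].
  apply Rle_trans with (exp (- (x ^ 2 * (1 + t ^ 2)))).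
  - apply Rmult_le_reg_r with (1 + t ^ 2); [lra |].
    unfold Rdiv. rewrite Rmult_assoc, Rinv_l by lra. nra.
  - apply exp_le_exp. nra.
Qed.

Lemma gauss_aux_bounds x : 0 <= gauss_aux x <= exp (- x ^ 2).
Proof.
  assert (Hint : ex_RInt (gauss_kernel x) 0 1).
  { apply ex_RInt_derivable. intros; unfold gauss_kernel; auto_derive; nra. }
  unfold gauss_aux. split.
  - apply RInt_ge_0; [lra | exact Hint |]. intros t _. apply gauss_kernel_bounds.
  - replace (exp (- x ^ 2)) with (RInt (fun _ => exp (- x ^ 2)) 0 1) by (rewrite RInt_const_R; lra).
    apply RInt_le; [lra | exact Hint | apply ex_RInt_const |].
    intros t _. apply gauss_kernel_bounds.
Qed.

Lemma gauss_int_nonneg y : 0 <= y -> 0 <= gauss_int y.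
Proof.
  intros Hy. apply RInt_ge_0; [exact Hy | |].
  - apply ex_RInt_derivable. intros; unfold gauss; auto_derive; easy.
  - intros; apply Rlt_le, exp_pos.
Qed.

Lemma PI_gt_3 : 3 < PI.
Proof. pose proof PI2_3_2. lra. Qed.

(* [(s/2 - I) (s/2 + I) = gauss_aux y <= exp (- y^2)] with [s = sqrt PI]. *)
Lemma gauss_int_tail y :
  0 <= y -> 0 <= sqrt PI / 2 - gauss_int y <= 2 * exp (- y ^ 2) / sqrt PI.
Proof.
  intros Hy.
  pose proof (gauss_int_nonneg y Hy). pose proof (gauss_int_sqr_add_aux y).
  pose proof (gauss_aux_bounds y). pose proof PI_gt_3.
  assert (Hs : 0 < sqrt PI) by (apply sqrt_lt_R0; lra).
  assert (Hs2 : sqrt PI * sqrt PI = PI) by (apply sqrt_sqrt; lra).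
  set (s := sqrt PI) in *. set (i := gauss_int y) in *. set (E := exp (- y ^ 2)) in *.
  assert (Hi : i <= s / 2) by nra.
  split; [lra |].
  apply Rmult_le_reg_r with (s / 2); [lra |].
  replace (2 * E / s * (s / 2)) with E by (field; lra). nra.
Qed.

(** * The standard normal distribution *)

Lemma sqrt_2PI_bounds : 1 < sqrt (2 * PI) < 3.
Proof.
  pose proof PI_gt_3. pose proof PI_4.
  pose proof (sqrt_pos (2 * PI)).
  assert (sqrt (2 * PI) * sqrt (2 * PI) = 2 * PI) by (apply sqrt_sqrt; lra).
  split; nra.
Qed.

Lemma sqrt_2PI : sqrt (2 * PI) = sqrt 2 * sqrt PI.
Proof. pose proof PI_gt_3. apply sqrt_mult; lra. Qed.

Lemma phi_pos x : 0 < phi x.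
Proof. pose proof sqrt_2PI_bounds. apply Rdiv_lt_0_compat; [apply exp_pos | lra]. Qed.

Lemma phi_even x : phi (- x) = phi x.
Proof. unfold phi. replace ((- x) ^ 2) with (x ^ 2) by ring. reflexivity. Qed.

Lemma phi_le_phi a t : t ^ 2 <= a ^ 2 -> phi a <= phi t.
Proof.
  intros H. pose proof sqrt_2PI_bounds. apply Rmult_le_compat_r.
  - apply Rlt_le, Rinv_0_lt_compat. lra.
  - apply exp_le_exp. lra.
Qed.

Lemma sqrt_2PI_mul_phi x : sqrt (2 * PI) * phi x = exp (- x ^ 2 / 2).
Proof. pose proof sqrt_2PI_bounds. unfold phi. field. lra. Qed.

Lemma phi_le_1 x : phi x <= 1.
Proof.
  pose proof sqrt_2PI_bounds. pose proof (phi_pos x). pose proof (sqrt_2PI_mul_phi x).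
  assert (exp (- x ^ 2 / 2) <= 1) by (rewrite <- exp_0; apply exp_le_exp; nra).
  nra.
Qed.

Lemma phi_1_ge : / 6 <= phi 1.
Proof.
  pose proof sqrt_2PI_bounds. pose proof (sqrt_2PI_mul_phi 1).
  pose proof (exp_ineq1_le (- 1 ^ 2 / 2)). nra.
Qed.

Lemma phi_derive x : is_derive phi x (- x * phi x).
Proof.
  pose proof sqrt_2PI_bounds. unfold phi. auto_derive; [lra |].
  replace (- x ^ 2 / 2) with (- (x * (x * 1)) * / 2) by (simpl; field). field. lra.
Qed.

Lemma phi_continuous x : continuous phi x.
Proof. apply (@ex_derive_continuous R_AbsRing R_NormedModule). eexists. apply phi_derive. Qed.

Lemma ex_RInt_phi a b : ex_RInt phi a b.
Proof. apply ex_RInt_derivable. intros x. eexists. apply phi_derive. Qed.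

Lemma RInt_phi_gauss_int u : RInt phi 0 u = - gauss_int (- u / sqrt 2) / sqrt PI.
Proof.
  pose proof PI_gt_3.
  assert (Hs : 0 < sqrt PI) by (apply sqrt_lt_R0; lra).
  assert (H2 : 0 < sqrt 2) by (apply sqrt_lt_R0; lra).
  assert (H22 : sqrt 2 * sqrt 2 = 2) by (apply sqrt_sqrt; lra).
  set (c := - / sqrt 2).
  rewrite (RInt_ext phi (fun t => scal (- / sqrt PI) (scal c (gauss (c * t + 0))))).
  2:{ intros t _. unfold phi, gauss, scal; simpl; unfold mult; simpl.
      rewrite sqrt_2PI. unfold c.
      replace (- ((- / sqrt 2 * t + 0) * ((- / sqrt 2 * t + 0) * 1))) with (- (t * (t * 1)) / 2).
      2:{ field_simplify; [| lra]. replace (sqrt 2 ^ 2) with 2 by (simpl; lra). reflexivity. }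
      field. lra. }
  rewrite (@RInt_scal R_CompleteNormedModule).
  2:{ apply ex_RInt_derivable. intros. unfold gauss, scal; simpl; unfold mult; simpl.
      auto_derive; easy. }
  rewrite (@RInt_comp_lin R_CompleteNormedModule).
  2:{ apply ex_RInt_derivable. intros; unfold gauss; auto_derive; easy. }
  unfold gauss_int, scal; simpl; unfold mult; simpl.
  replace (c * 0 + 0) with 0 by ring.
  replace (c * u + 0) with (- u / sqrt 2) by (unfold c; field; lra).
  field. lra.
Qed.

Lemma RInt_phi_tail u : u < 0 -> 0 <= / 2 + RInt phi 0 u <= / - u.
Proof.
  intros Hu. pose proof PI_gt_3.
  assert (Hs : 0 < sqrt PI) by (apply sqrt_lt_R0; lra).
  assert (Hs2 : sqrt PI * sqrt PI = PI) by (apply sqrt_sqrt; lra).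
  assert (H2 : 0 < sqrt 2) by (apply sqrt_lt_R0; lra).
  assert (H22 : sqrt 2 * sqrt 2 = 2) by (apply sqrt_sqrt; lra).
  set (y := - u / sqrt 2).
  assert (Hy : 0 <= y) by (apply Rle_mult_inv_pos; lra).
  assert (Hy2 : y ^ 2 = u ^ 2 / 2).
  { unfold y. field_simplify; [| lra]. replace (sqrt 2 ^ 2) with 2 by (simpl; lra). reflexivity. }
  rewrite RInt_phi_gauss_int. fold y.
  replace (/ 2 + - gauss_int y / sqrt PI) with ((sqrt PI / 2 - gauss_int y) / sqrt PI)
    by (field; lra).
  destruct (gauss_int_tail y Hy) as [Hlo Hhi].
  split; [apply Rle_mult_inv_pos; lra |].
  pose proof (exp_opp_le_inv (y ^ 2) (pow2_ge_0 y)) as Hexp.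
  pose proof (exp_pos (- y ^ 2)).
  assert (Hratio : (sqrt PI / 2 - gauss_int y) / sqrt PI <= 2 / PI * exp (- y ^ 2)).
  { set (s := sqrt PI) in *. rewrite <- Hs2.
    apply Rmult_le_reg_r with s; [lra |].
    replace ((s / 2 - gauss_int y) / s * s) with (s / 2 - gauss_int y) by (field; lra).
    replace (2 / (s * s) * exp (- y ^ 2) * s) with (2 * exp (- y ^ 2) / s) by (field; lra).
    exact Hhi. }
  assert (H2PI : 2 / PI < 1) by (apply Rmult_lt_reg_r with PI; [lra | field_simplify; lra]).
  assert (Hinv : / (1 + y ^ 2) <= / - u) by (apply Rinv_le_contravar; nra).
  assert (0 < 2 / PI) by (apply Rdiv_lt_0_compat; lra).
  nra.
Qed.

Lemma RInt_phi_lim : filterlim (RInt phi 0) (Rbar_locally m_infty) (locally (- / 2)).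
Proof.
  apply filterlim_locally. intros [eps Heps]. simpl.
  exists (- / eps). intros x Hx.
  assert (Hinv : 0 < / eps) by (apply Rinv_0_lt_compat, Heps).
  destruct (RInt_phi_tail x ltac:(lra)) as [Hlo Hhi].
  unfold ball; simpl; unfold AbsRing_ball, abs, minus, plus, opp; simpl.
  rewrite Rabs_right by lra.
  apply Rle_lt_trans with (/ - x); [lra |].
  rewrite <- (Rinv_inv eps). apply Rinv_lt_contravar; nra.
Qed.

Lemma RInt_phi_derive x : is_derive (RInt phi 0) x (phi x).
Proof.
  apply (@is_derive_RInt R_CompleteNormedModule) with 0; [| apply phi_continuous].
  apply filter_forall. intros; apply (@RInt_correct R_CompleteNormedModule), ex_RInt_phi.
Qed.

Lemma Phi_eq x : Phi x = / 2 + RInt phi 0 x.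
Proof.
  assert (HD : forall y, Derive (RInt phi 0) y = phi y)
    by (intros; apply is_derive_unique, RInt_phi_derive).
  unfold Phi.
  apply (@is_RInt_gen_unique R_CompleteNormedModule);
    [apply Proper_StrongProper, Rbar_locally_filter | apply Proper_StrongProper, at_point_filter |].
  replace (/ 2 + RInt phi 0 x) with (RInt phi 0 x - - / 2) by ring.
  apply (is_RInt_gen_ext (Derive (RInt phi 0))).
  - apply filter_forall. intros ab y _. apply HD.
  - apply is_RInt_gen_Derive.
    + apply filter_forall. intros ab y _. eexists. apply RInt_phi_derive.
    + apply filter_forall. intros ab y _.
      apply (continuous_ext phi); [intros; symmetry; apply HD | apply phi_continuous].
    + apply RInt_phi_lim.
    + intros P HP. exact (locally_singleton _ _ HP).
Qed.

Lemma Phi_sub a b : Phi b - Phi a = RInt phi a b.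
Proof.
  rewrite !Phi_eq. rewrite <- (@RInt_Chasles R_CompleteNormedModule phi 0 a b) by apply ex_RInt_phi.
  unfold plus; simpl. ring.
Qed.

Lemma Phi_0 : Phi 0 = / 2.
Proof. rewrite Phi_eq, RInt_point. unfold zero; simpl. ring. Qed.

Lemma Phi_tail u : u < 0 -> 0 <= Phi u <= / - u.
Proof. intros Hu. rewrite Phi_eq. apply RInt_phi_tail, Hu. Qed.

Lemma Phi_le a b : a <= b -> Phi a <= Phi b.
Proof.
  intros Hab. pose proof (Phi_sub a b).
  assert (0 <= RInt phi a b)
    by (apply RInt_ge_0; [exact Hab | apply ex_RInt_phi | intros; apply Rlt_le, phi_pos]).
  lra.
Qed.

Lemma Phi_le_half_sub a : 0 <= a -> Phi (- a) <= / 2 - a * phi a.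
Proof.
  intros Ha. pose proof (Phi_sub (- a) 0) as Hsub. rewrite Phi_0 in Hsub.
  assert (a * phi a <= RInt phi (- a) 0).
  { replace (a * phi a) with (RInt (fun _ => phi a) (- a) 0) by (rewrite RInt_const_R; nra).
    apply RInt_le; [lra | apply ex_RInt_const | apply ex_RInt_phi |].
    intros t Ht. apply phi_le_phi. nra. }
  lra.
Qed.

(* [phi s <= - s phi s / t] on [(-oo, -t]], and [- s phi s] is the derivative of [phi]. *)
Lemma Mills_upper t : 0 <= t -> t * Phi (- t) <= phi t.
Proof.
  intros Ht. destruct (Rle_lt_or_eq _ _ Ht) as [Htpos | <-].
  2:{ rewrite Rmult_0_l. apply Rlt_le, phi_pos. }
  assert (Htail : Phi (- t) - phi t / t <= 0).
  { apply (Rle_0_of_le_inv_opp _ (- t)). intros u Hu Hu0.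
    assert (Hint : RInt phi u (- t) <= phi t / t - phi u / t).
    { rewrite <- (phi_even t).
      rewrite <- (RInt_is_derive (fun s => phi s / t) (fun s => - s * phi s / t)).
      - apply RInt_le; [lra | apply ex_RInt_phi | |].
        + apply ex_RInt_derivable. intros x. unfold phi. auto_derive. easy.
        + intros s Hs. pose proof (phi_pos s).
          apply Rmult_le_reg_r with t; [lra |].
          replace (- s * phi s / t * t) with (- s * phi s) by (field; lra). nra.
      - intros s. replace (- s * phi s / t) with (/ t * (- s * phi s)) by (field; lra).
        apply (is_derive_ext (fun s => / t * phi s)); [intros; apply Rmult_comm |].
        apply (is_derive_scal phi), phi_derive.
      - intros s. apply (@ex_derive_continuous R_AbsRing R_NormedModule).
        unfold phi. auto_derive. easy. }
    pose proof (Phi_sub u (- t)). pose proof (Phi_tail u Hu0).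
    assert (0 <= phi u / t) by (apply Rlt_le, Rdiv_lt_0_compat; [apply phi_pos | lra]).
    lra. }
  apply Rmult_le_reg_r with (/ t); [apply Rinv_0_lt_compat; lra |].
  replace (t * Phi (- t) * / t) with (Phi (- t)) by (field; lra). lra.
Qed.

(* [- x phi x / (1 + x^2)] has derivative [phi x (x^4 + 2 x^2 - 1) / (1 + x^2)^2 <= phi x]. *)
Lemma Mills_lower a : 0 <= a -> a * phi a <= (1 + a ^ 2) * Phi (- a).
Proof.
  intros Ha.
  set (F := fun x => - x * phi x / (1 + x ^ 2)).
  set (dF := fun x => phi x * (x ^ 4 + 2 * x ^ 2 - 1) / (1 + x ^ 2) ^ 2).
  assert (HF : forall x : R, is_derive F x (dF x)).
  { intros x. unfold F, dF, phi. pose proof sqrt_2PI_bounds. auto_derive; [nra |].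
    replace (- x ^ 2 / 2) with (- (x * (x * 1)) * / 2) by (simpl; field).
    field. split; [lra | nra]. }
  assert (HdF : forall x : R, ex_derive dF x).
  { intros x. unfold dF, phi. pose proof sqrt_2PI_bounds. auto_derive. repeat split; nra. }
  assert (Htail : F (- a) - Phi (- a) <= 0).
  { apply (Rle_0_of_le_inv_opp _ (- a)). intros u Hu Hu0.
    assert (Hint : F (- a) - F u <= RInt phi u (- a)).
    { rewrite <- (RInt_is_derive F dF u (- a) HF) by
        (intros; apply (@ex_derive_continuous R_AbsRing R_NormedModule), HdF).
      apply RInt_le; [lra | apply ex_RInt_derivable, HdF | apply ex_RInt_phi |].
      - intros x _. pose proof (phi_pos x). unfold dF.
        apply Rmult_le_reg_r with ((1 + x ^ 2) ^ 2); [nra |].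
        unfold Rdiv. rewrite Rmult_assoc, Rinv_l by nra. nra. }
    assert (HFu : F u <= / - u).
    { pose proof (phi_le_1 u). pose proof (phi_pos u).
      apply Rle_trans with (- u / (1 + u ^ 2)).
      - unfold F, Rdiv. apply Rmult_le_compat_r; [apply Rlt_le, Rinv_0_lt_compat |]; nra.
      - apply Rmult_le_reg_r with ((1 + u ^ 2) * - u); [nra |].
        replace (- u / (1 + u ^ 2) * ((1 + u ^ 2) * - u)) with (u ^ 2) by (field; nra).
        replace (/ - u * ((1 + u ^ 2) * - u)) with (1 + u ^ 2) by (field; lra). lra. }
    pose proof (Phi_sub u (- a)). pose proof (Phi_tail u Hu0). lra. }
  assert (HFa : F (- a) * (1 + a ^ 2) = a * phi a) by (unfold F; rewrite phi_even; field; nra).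
  rewrite <- HFa, (Rmult_comm (1 + a ^ 2)). apply Rmult_le_compat_r; nra.
Qed.

(** * [M_R], [M_C] and the optimal ratio *)

Lemma M_R_pos eps a : 0 < eps <= 1 -> 0 <= a -> 0 < M_R eps a.
Proof.
  intros Heps Ha. pose proof (Mills_lower a Ha). pose proof (pow2_ge_0 a).
  unfold M_R. nra.
Qed.

Lemma M_C_eq eps a :
  M_C eps a = eps * (1 + a ^ 2)
    + (1 - eps) * sqrt (2 * PI) * (phi (sqrt 2 * a) - sqrt 2 * a * Phi (- (sqrt 2 * a))).
Proof.
  assert (H22 : sqrt 2 * sqrt 2 = 2) by (apply sqrt_sqrt; lra).
  unfold M_C. rewrite sqrt_2PI.
  replace (2 * a * sqrt PI) with (sqrt 2 * sqrt 2 * a * sqrt PI) by (rewrite H22; ring).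
  ring.
Qed.

Lemma M_C_pos eps a : 0 < eps <= 1 -> 0 <= a -> 0 < M_C eps a.
Proof.
  intros Heps Ha. pose proof sqrt_2PI_bounds. pose proof (pow2_ge_0 a).
  assert (H2 : 0 <= sqrt 2) by apply sqrt_pos.
  pose proof (Mills_upper (sqrt 2 * a) (Rmult_le_pos _ _ H2 Ha)).
  rewrite M_C_eq.
  assert (0 <= (1 - eps) * sqrt (2 * PI) * (phi (sqrt 2 * a) - sqrt 2 * a * Phi (- (sqrt 2 * a))))
    by (apply Rmult_le_pos; [apply Rmult_le_pos |]; lra).
  nra.
Qed.

Lemma Mfun_pos cplx eps a : 0 < eps <= 1 -> 0 <= a -> 0 < Mfun cplx eps a.
Proof. destruct cplx; [apply M_C_pos | apply M_R_pos]. Qed.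

(* [M_R eps 0 = 1], and the slope of [M_R eps] at [0] is [- 4 (1 - eps) phi 0 < 0]. *)
Lemma M_R_lt_1 eps : 0 <= eps < 1 -> M_R eps ((1 - eps) / 3) < 1.
Proof.
  intros Heps. set (a := (1 - eps) / 3).
  assert (Ha : 0 < a <= 1 / 3) by (unfold a; lra).
  pose proof (Phi_le_half_sub a ltac:(lra)) as HPhi.
  assert (Hphi : / 6 <= phi a)
    by (pose proof phi_1_ge; pose proof (phi_le_phi 1 a ltac:(nra)); lra).
  assert (HPhi' : (1 - eps) * (1 + a ^ 2) * Phi (- a)
                  <= (1 - eps) * (1 + a ^ 2) * (/ 2 - a * phi a))
    by (apply Rmult_le_compat_l; nra).
  assert (Hdip : a ^ 2 < 2 * (1 - eps) * a * phi a * (2 + a ^ 2)).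
  { replace (1 - eps) with (3 * a) by (unfold a; field).
    pose proof (pow2_ge_0 a).
    assert (0 <= a ^ 2 * (phi a - / 6) * (2 + a ^ 2))
      by (apply Rmult_le_pos; [apply Rmult_le_pos |]; lra).
    nra. }
  unfold M_R. nra.
Qed.

Lemma M_C_lt_1 eps : 0 <= eps < 1 -> M_C eps ((1 - eps) / 24) < 1.
Proof.
  intros Heps. set (a := (1 - eps) / 24).
  assert (Ha : 0 < a <= 1 / 24) by (unfold a; lra).
  assert (H22 : sqrt 2 * sqrt 2 = 2) by (apply sqrt_sqrt; lra).
  pose proof (sqrt_pos 2).
  assert (H2 : 1 <= sqrt 2 <= 2) by nra.
  set (t := sqrt 2 * a).
  assert (Ht : a <= t <= 1) by (unfold t; nra).
  pose proof sqrt_2PI_bounds.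
  assert (Hexp : sqrt (2 * PI) * phi t <= 1).
  { rewrite sqrt_2PI_mul_phi, <- exp_0. apply exp_le_exp. nra. }
  assert (HPhi : / 12 <= Phi (- t)).
  { pose proof (Mills_lower 1 ltac:(lra)). pose proof phi_1_ge.
    pose proof (Phi_le (- (1)) (- t) ltac:(lra)).
    lra. }
  assert (HtPhi : a / 12 <= t * Phi (- t)) by nra.
  assert (Htail : a / 12 <= sqrt (2 * PI) * (t * Phi (- t))) by nra.
  assert (1 - eps = 24 * a) by (unfold a; field).
  rewrite M_C_eq. fold t. nra.
Qed.

Lemma Mfun_lt_1 cplx eps : 0 <= eps < 1 -> exists a, 0 <= a /\ Mfun cplx eps a < 1.
Proof.
  intros Heps. destruct cplx.
  - exists ((1 - eps) / 24). split; [lra | apply M_C_lt_1, Heps].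
  - exists ((1 - eps) / 3). split; [lra | apply M_R_lt_1, Heps].
Qed.

Lemma Err_inf_sub_at_2M M s d :
  0 < M -> M < d -> Err_inf M s d - Err_inf M s (2 * M) = M * s * (d - 2 * M) ^ 2 / (d - M).
Proof. intros HM Hd. unfold Err_inf. field. lra. Qed.

Lemma is_delta_dagger_eq_2M M s d : 0 < M -> 0 < s -> is_delta_dagger M s d -> d = 2 * M.
Proof.
  intros HM Hs [Hd Hmin].
  pose proof (Hmin (2 * M) ltac:(lra)) as Hle.
  pose proof (Err_inf_sub_at_2M M s d HM Hd) as Hsub.
  assert (Hsq : M * s * (d - 2 * M) ^ 2 <= 0).
  { apply Rmult_le_reg_r with (/ (d - M)); [apply Rinv_0_lt_compat; lra |].
    rewrite Rmult_0_l. unfold Rdiv in Hsub. lra. }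
  assert (HMs : 0 < M * s) by nra.
  pose proof (pow2_ge_0 (d - 2 * M)).
  assert (Hsq0 : (d - 2 * M) * (d - 2 * M) = 0) by nra.
  apply Rmult_integral in Hsq0. lra.
Qed.

Theorem proposition2 (cplx : bool) (eps sigma0sq alpha_dag delta_dag : R) :
  0 < eps < 1 ->
  0 < sigma0sq ->
  is_alpha_dagger cplx eps alpha_dag ->
  is_delta_dagger (Mfun cplx eps alpha_dag) sigma0sq delta_dag ->
  delta_dag < 2 /\
  (Mfun cplx eps alpha_dag < /2 -> delta_dag < 1).
Proof.
  intros Heps Hsigma [Halpha Hmin] Hdelta.
  pose proof (Mfun_pos cplx eps alpha_dag ltac:(lra) Halpha) as Hpos.
  destruct (Mfun_lt_1 cplx eps ltac:(lra)) as [a [Ha Hlt]].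
  pose proof (Hmin a Ha) as Hle.
  rewrite (is_delta_dagger_eq_2M _ _ _ Hpos Hsigma Hdelta).
  split; intros; lra.
Qed.
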